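(* For $N\in\mathbb{N}$ (so $N\ge1$) and $k\in\mathbb{N}\cup\{0\}$, \begin{align*} \mathrm{Ch}_{k+N,\lambda}(x)&=\lambda^{N}\sum_{r=1}^{N}\sum_{i=0}^{r}a^{(\lambda)}_{i,r-i}(N,x)\,\lambda^{-r}2^{-i}\sum_{m+n+a=k}\binom{k}{m,n,a}\Bigl(-\tfrac12\Bigr)^{m}(-1)^{n}(i+m-1)_m\,(r+n-i-1)_n\\ &\qquad\times\sum_{l+e+f+s=a}(-1)^{l}\lambda^{a-s}\frac{\binom{a}{l,e,f,s}}{\binom{e+m}{m}\binom{f+n}{n}}\,(N+l-1)_l\,S_1(e+m,m)\,S_1(f+n,n)\,\mathrm{Ch}_{s,\lambda}(x), \end{align*} where the inner sums run over nonnegative integers, and for $1\le r\le N$, $0\le i\le r$, \[ a^{(\lambda)}_{i,r-i}(N,x)=(-1)^{N+i-r}\, i!\, S_{1,i-1}(r-i)\,(N-1)!\,H_{N-1,r-1}\,(x)_{r-i}. \]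
   Context: Let $\lambda\neq0$. The $\lambda$-Changhee (degenerate Changhee) polynomials $\mathrm{Ch}_{n,\lambda}(x)$ are defined by \[ \frac{2\lambda}{2\lambda+\log(1+\lambda t)}\Bigl(1+\frac{\log(1+\lambda t)}{\lambda}\Bigr)^{x}=\sum_{n=0}^{\infty}\mathrm{Ch}_{n,\lambda}(x)\frac{t^n}{n!}. \] $(y)_0=1$ and $(y)_n=y(y-1)\cdots(y-n+1)$ for $n\ge1$ (falling factorial; in particular $(n-1)_n=0$ for $n\ge1$). $S_1(n,l)$ are the Stirling numbers of the first kind, defined by $(y)_n=\sum_{l=0}^n S_1(n,l)y^l$. Multinomial coefficients $\binom{k}{m,n,a}=\frac{k!}{m!\,n!\,a!}$, etc. Generalized harmonic numbers: $H_{N,0}=1$ for all integers $N\ge 0$; $H_{N,1}=1+\frac12+\cdots+\frac1N$ for $N\ge1$; and for $2\le j\le N$, $H_{N,j}=\frac{H_{N-1,j-1}}{N}+\frac{H_{N-2,j-1}}{N-1}+\cdots+\frac{H_{j-1,j-1}}{j}$. Generalized Changhee power sums (for $k=1$), for integers $N\ge0$: $S_{1,-1}(N)=1$, $S_{1,0}(N)=N+1$, $S_{1,j}(N)=\sum_{l=0}^{N}S_{1,j-1}(l)$ for $j\ge1$. *)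

From HB Require Import structures.
From mathcomp Require Import all_boot all_order all_algebra.
Set Implicit Arguments. Unset Strict Implicit. Unset Printing Implicit Defensive.
Import Order.TTheory GRing.Theory Num.Theory.
Local Open Scope ring_scope.

Definition ffact (R : numFieldType) (y : R) (n : nat) : R :=
  \prod_(k < n) (y - k%:R).

Definition stirling1 (n l : nat) : int :=
  (\prod_(k < n) ('X - (k%:Z)%:P) : {poly int})`_l.

Fixpoint harm (R : numFieldType) (j N : nat) {struct j} : R :=
  match j with
  | 0 => 1
  | j'.+1 => \sum_(j'.+1 <= k < N.+1) harm R j' k.-1 / k%:R
  end.
Definition H (R : numFieldType) (N j : nat) : R := harm R j N.

(* Generalized Changhee power sums with SHIFTED index:
   chps i N = S_{1,i-1}(N).  So chps 0 N = S_{1,-1}(N) = 1 and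
   chps (i+1) N = \sum_{l=0}^{N} chps i l  (giving chps 1 N = N+1). *)
Fixpoint chps (i N : nat) {struct i} : nat :=
  match i with
  | 0 => 1
  | i'.+1 => \sum_(l < N.+1) chps i' l
  end.

(* Truncation (up to degree n) of the power series log(1 + lam t)
   = \sum_{k>=1} (-1)^{k-1} lam^k t^k / k. *)
Definition logtr (R : numFieldType) (lam : R) (n : nat) : {poly R} :=
  \sum_(1 <= k < n.+1) (((-1) ^+ k.-1 * lam ^+ k / k%:R) *: 'X^k).

(* The generating function
     2 lam / (2 lam + log(1+lam t)) * (1 + log(1+lam t)/lam)^x
   as a formal power series, with L = log(1+lam t) (no constant term):
     2 lam / (2 lam + L) = \sum_j (- L/(2 lam))^j,
     (1 + L/lam)^x       = \sum_j binom(x,j) (L/lam)^j,  binom(x,j) = (x)_j/j!.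
   Truncating L and both sums at degree n leaves the coefficients of
   t^0..t^n unchanged. *)
Definition chgen (R : numFieldType) (lam x : R) (n : nat) : {poly R} :=
  (\sum_(j < n.+1) ((- (2 * lam)^-1) ^+ j *: (logtr lam n) ^+ j)) *
  (\sum_(j < n.+1) ((ffact x j / j`!%:R * lam ^- j) *: (logtr lam n) ^+ j)).

Definition Ch (R : numFieldType) (n : nat) (lam x : R) : R :=
  n`!%:R * (chgen lam x n)`_n.

Definition acoef (R : numFieldType) (i r N : nat) (x : R) : R :=
  (-1) ^+ (N + i - r) * i`!%:R * (chps i (r - i))%:R * (N.-1)`!%:R
  * H R N.-1 r.-1 * ffact x (r - i).

Definition multi3 (R : numFieldType) (k m n a : nat) : R :=
  k`!%:R / (m`!%:R * n`!%:R * a`!%:R).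
Definition multi4 (R : numFieldType) (a l e f s : nat) : R :=
  a`!%:R / (l`!%:R * e`!%:R * f`!%:R * s`!%:R).

From HB Require Import structures.
From mathcomp Require Import all_boot all_order all_algebra.
From mathcomp.algebra_tactics Require Import ring.
From mathcomp Require Import zify.
Import Order.TTheory GRing.Theory Num.Theory.
Local Open Scope ring_scope.

(* Write [u = log(1 + lam t) / lam]; the generating function is [G = P E] with
   [P = 1 / (1 + u/2)] and [E = (1 + u)^x].  Put [W = u' = 1 / (1 + lam t)] and
   [Q = 1 / (1 + u)].  Then [W' = - lam W^2], [P' = - W P^2 / 2], [Q' = - W Q^2]
   and [E' = x W Q E], so differentiating a monomial [W^N P^i Q^j G] gives a
   combination of monomials [W^(N+1) P^i' Q^j' G].  Hence
   [G^(N) = sum lam^(N-i-j) 2^-i a_{i,j}(N, x) W^N P^i Q^j G], the coefficients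
   being identified through the three-term recurrence they satisfy.  Since
   [Ch_(k+N) = k! [t^k] G^(N)], the formula follows by expanding [P^i] and [Q^j]
   in powers of [u], [u^m] in powers of [t] (Stirling numbers of the first kind)
   and [W^N] as a negative binomial series.  All series are polynomials truncated
   at a fixed degree: [p = q %[modX n]] says that [p] and [q] agree below degree [n]. *)

Definition eqmodX {R : nzSemiRingType} (n : nat) (p q : {poly R}) :=
  forall i, (i < n)%N -> p`_i = q`_i.

Notation "p = q %[modX n ]" := (eqmodX n p q)
  (at level 70, q at next level, format "p  =  q  %[modX  n ]") : ring_scope.

Section TruncatedEquality.
Context {R : comNzRingType}.
Implicit Types (p q g u : {poly R}) (n : nat).

Lemma eqmodX_refl n p : p = p %[modX n].
Proof. by []. Qed.

Lemma eqmodX_eq {n p q} : p = q -> p = q %[modX n].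
Proof. by move->. Qed.

Lemma eqmodX_trans {n p q r} : p = q %[modX n] -> q = r %[modX n] -> p = r %[modX n].
Proof. by move=> h1 h2 i hi; rewrite h1 // h2. Qed.

Lemma eqmodXW m {n p q} : (m <= n)%N -> p = q %[modX n] -> p = q %[modX m].
Proof. by move=> hmn h i hi; apply: h; apply: leq_trans hmn. Qed.

Lemma eqmodXD {n p q p' q'} :
  p = p' %[modX n] -> q = q' %[modX n] -> p + q = p' + q' %[modX n].
Proof. by move=> h1 h2 i hi; rewrite !coefD h1 ?h2. Qed.

Lemma eqmodXZ c {n p p'} : p = p' %[modX n] -> c *: p = c *: p' %[modX n].
Proof. by move=> h i hi; rewrite !coefZ h. Qed.

Lemma eqmodXMn k {n p p'} : p = p' %[modX n] -> p *+ k = p' *+ k %[modX n].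
Proof. by move=> h i hi; rewrite !coefMn h. Qed.

Lemma eqmodXM {n p q p' q'} :
  p = p' %[modX n] -> q = q' %[modX n] -> p * q = p' * q' %[modX n].
Proof.
move=> h1 h2 i hi; rewrite !coefM; apply: eq_bigr => j _.
by rewrite h1 ?h2 //; have := ltn_ord j; lia.
Qed.

Lemma eqmodXMl p {n q q'} : q = q' %[modX n] -> p * q = p * q' %[modX n].
Proof. exact: eqmodXM (eqmodX_refl n p). Qed.

Lemma eqmodXMr q {n p p'} : p = p' %[modX n] -> p * q = p' * q %[modX n].
Proof. by move=> h; apply: eqmodXM h (eqmodX_refl n q). Qed.

Lemma eqmodXX k {n p p'} : p = p' %[modX n] -> p ^+ k = p' ^+ k %[modX n].
Proof. by move=> h; elim: k => [|k IH]; rewrite ?expr0 // !exprS; apply: eqmodXM. Qed.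

Lemma eqmodX_sum {n} (I : Type) (r : seq I) (P : pred I) (F G : I -> {poly R}) :
  (forall i, P i -> F i = G i %[modX n]) ->
  \sum_(i <- r | P i) F i = \sum_(i <- r | P i) G i %[modX n].
Proof. by move=> h j hj; rewrite !coef_sum; apply: eq_bigr => i Pi; apply: h. Qed.

Lemma eqmodX_deriv {n p q} : p = q %[modX n] -> p^`() = q^`() %[modX n.-1].
Proof. by move=> h i hi; rewrite !coef_deriv h //; lia. Qed.

Lemma eqmodX_derivM {n p q dp dq} : p^`() = dp %[modX n] -> q^`() = dq %[modX n] ->
  (p * q)^`() = dp * q + p * dq %[modX n].
Proof. by move=> hp hq; rewrite derivM; apply: eqmodXD; [apply: eqmodXMr | apply: eqmodXMl]. Qed.

Lemma coef_exp_lt u j i : u`_0 = 0 -> (i < j)%N -> (u ^+ j)`_i = 0.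
Proof.
move=> u0; elim: j i => [//|j IH] i hi.
rewrite exprS coefM big1 // => t _.
case: (nat_of_ord t) (ltn_ord t) => [|t'] ht; first by rewrite u0 mul0r.
by rewrite IH ?mulr0 //; lia.
Qed.

Lemma coef_comp_poly_lt g {u n i} : u`_0 = 0 -> (i < n)%N ->
  (g \Po u)`_i = \sum_(m < n) g`_m * (u ^+ m)`_i.
Proof.
move=> u0 hi; pose F m := g`_m * (u ^+ m)`_i.
rewrite coef_comp_poly (big_ord_widen _ F (leq_addr n (size g))).
rewrite [RHS](big_ord_widen _ F (leq_addl (size g) n)) big_mkcond [RHS]big_mkcond /=.
apply: eq_bigr => m _; rewrite /F; case: ltnP => hg; case: ltnP => hn //.
  by rewrite coef_exp_lt ?mulr0 //; lia.
by rewrite nth_default ?mul0r.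
Qed.

Lemma comp_poly_eqmodX n g u : u`_0 = 0 ->
  g \Po u = \sum_(m < n) g`_m *: u ^+ m %[modX n].
Proof.
move=> u0 i hi; rewrite (coef_comp_poly_lt g u0 hi) coef_sum.
by apply: eq_bigr => m _; rewrite coefZ.
Qed.

Lemma eqmodX_comp {n g g' u u'} : u`_0 = 0 ->
  g = g' %[modX n] -> u = u' %[modX n] -> g \Po u = g' \Po u' %[modX n].
Proof.
move=> u0 hg hu i hi.
have u0' : u'`_0 = 0 by rewrite -hu //; lia.
rewrite (coef_comp_poly_lt g u0 hi) (coef_comp_poly_lt g' u0' hi).
by apply: eq_bigr => m _; rewrite hg ?(eqmodXX m hu i hi).
Qed.

Lemma comp_poly_poly n (c : nat -> R) u :
  (\poly_(j < n) c j) \Po u = \sum_(j < n) c j *: u ^+ j.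
Proof.
rewrite poly_def; elim: n => [|n IH]; first by rewrite !big_ord0 comp_poly0.
by rewrite !big_ord_recr /= comp_polyD comp_polyZ comp_Xn_poly IH.
Qed.

Lemma deriv_exp_riccati k {n} {a c : {poly R}} : a^`() = c * a ^+ 2 %[modX n] ->
  (a ^+ k)^`() = k%:R *: (c * a ^+ k.+1) %[modX n].
Proof.
move=> h; rewrite deriv_exp.
apply: (@eqmodX_trans _ _ ((c * a ^+ 2) * a ^+ k.-1 *+ k)).
  exact/eqmodXMn/eqmodXMr.
apply: eqmodX_eq; case: k => [|k]; first by rewrite !mulr0n scale0r.
by rewrite scaler_nat !exprS expr0 /=; ring.
Qed.

End TruncatedEquality.

Lemma hockey_stick (i m : nat) :
  (\sum_(j < m.+1) 'C((i + j).-1, j) = 'C(i + m, m))%N.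
Proof.
elim: m => [|m IH]; first by rewrite big_ord1 !bin0.
by rewrite big_ord_recr /= IH addnS binS addnC.
Qed.

Section Geometric.
Context {R : comNzRingType}.

Definition geom (K : nat) (a : R) : {poly R} := \poly_(m < K.+1) a ^+ m.

Lemma coef_geom_exp K a i m : (m <= K)%N ->
  (geom K a ^+ i)`_m = a ^+ m * 'C((i + m).-1, m)%:R.
Proof.
elim: i m => [|i IH] m hm.
  rewrite expr0 coef1; case: m hm => [|m] hm; first by rewrite bin0 expr0 mulr1.
  by rewrite bin_small ?mulr0.
rewrite exprS coefM.
transitivity (\sum_(j < m.+1) a ^+ m * 'C((i + (m - j)).-1, m - j)%:R).
  apply: eq_bigr => j _; have hj := ltn_ord j.
  rewrite coef_poly ifT; last by lia.
  by rewrite IH ?mulrA -?exprD ?subnKC //; lia.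
rewrite -mulr_sumr -natr_sum (reindex_inj rev_ord_inj) /=.
under eq_bigr => j _ do rewrite subKn ?leq_ord //.
by rewrite hockey_stick.
Qed.

Lemma deriv_geom K a : (geom K a)^`() = a%:P * geom K a ^+ 2 %[modX K].
Proof.
move=> i hi; rewrite coef_deriv coefCM coef_geom_exp; last by lia.
by rewrite coef_poly ifT ?add2n ?binSn ?exprS ?mulrA ?mulr_natr //; lia.
Qed.

End Geometric.

Lemma coef_logtr {R : numFieldType} (lam : R) n i : (logtr lam n)`_i =
  if (0 < i <= n)%N then (-1) ^+ i.-1 * lam ^+ i / i%:R else 0.
Proof. by rewrite coef_sumMXn big_nat1_eq. Qed.

Lemma ffactS {R : numFieldType} (y : R) n : ffact y n.+1 = ffact y n * (y - n%:R).
Proof. by rewrite /ffact big_ord_recr. Qed.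

Lemma natr_succ_neq0 {R : numFieldType} n : (1 + n%:R : R) != 0.
Proof. by rewrite addrC natr1 pnatr_eq0. Qed.

Lemma natr_addS_neq0 {R : numFieldType} k n : (k.+1%:R + n%:R : R) != 0.
Proof. by rewrite -natrD pnatr_eq0. Qed.

Lemma natr_fact_neq0 {R : numFieldType} n : (n`!%:R : R) != 0.
Proof. by rewrite pnatr_eq0 -lt0n fact_gt0. Qed.

(* The coefficient identity behind [(1 + t) B' = x B] for [B = (1 + t)^x]. *)
Lemma ffact_alt_sum {R : numFieldType} (x : R) i :
  x * \sum_(j < i.+1) (-1) ^+ j * (ffact x (i - j) / (i - j)`!%:R)
  = ffact x i.+1 / i.+1`!%:R *+ i.+1.
Proof.
elim: i => [|i IH].
  rewrite big_ord1 /= /ffact big_ord1 big_ord0 /= expr0 subr0 mulr1n !mul1r.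
  by rewrite mulr1n.
rewrite big_ord_recl /= subn0.
have -> : \sum_(j < i.+1) (-1) ^+ (bump 0 j) * (ffact x (i.+1 - bump 0 j) / (i.+1 - bump 0 j)`!%:R)
   = - \sum_(j < i.+1) (-1) ^+ j * (ffact x (i - j) / (i - j)`!%:R).
  rewrite -sumrN; apply: eq_bigr => j _.
  by rewrite /bump /= add1n subSS exprS mulN1r mulNr.
rewrite mulrDr mulrN IH !ffactS !factS !natrM expr0 mul1r.
rewrite -[_ *+ i.+1]mulr_natr -[_ *+ i.+2]mulr_natr -[_ *+ i.+1]mulr_natr.
by field; rewrite natr_fact_neq0 natr_succ_neq0 natr_addS_neq0.
Qed.

Section Series.
Context {R : numFieldType}.
Variables (lam x : R) (K : nat).
Hypothesis lam_neq0 : lam != 0.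

(* The series of the proof idea, truncated at degree [K]: [ulog = u], [wser = W],
   [binser = (1 + t)^x], and [Gser] is the generating function of [Ch]. *)

Definition ulog : {poly R} := lam^-1 *: logtr lam K.
Definition wser : {poly R} := geom K (- lam).
Definition binser : {poly R} := \poly_(j < K.+1) (ffact x j / j`!%:R).
Definition Pser : {poly R} := geom K (- 2^-1) \Po ulog.
Definition Qser : {poly R} := geom K (-1) \Po ulog.
Definition Eser : {poly R} := binser \Po ulog.
Definition Gser : {poly R} := Pser * Eser.
Definition Tser (N i j : nat) : {poly R} := wser ^+ N * Pser ^+ i * Qser ^+ j * Gser.

Lemma ulog0 : ulog`_0 = 0.
Proof. by rewrite coefZ coef_logtr mulr0. Qed.

Lemma deriv_ulog : ulog^`() = wser %[modX K].
Proof.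
move=> i hi; rewrite coef_deriv coefZ coef_logtr coef_poly !ifT /=; try lia.
rewrite -mulr_natr [(- lam) ^+ _]exprNn exprS.
by field; rewrite lam_neq0 natr_succ_neq0.
Qed.

Lemma deriv_binser : binser^`() = x%:P * (geom K (-1) * binser) %[modX K].
Proof.
move=> i hi; rewrite coef_deriv coefCM coefM coef_poly ifT; last by lia.
rewrite -ffact_alt_sum; congr (_ * _); apply: eq_bigr => j _.
by rewrite !coef_poly !ifT //; have := ltn_ord j; lia.
Qed.

Lemma deriv_comp_riccati g c : g^`() = c%:P * g ^+ 2 %[modX K] ->
  (g \Po ulog)^`() = (c%:P * wser) * (g \Po ulog) ^+ 2 %[modX K].
Proof.
move=> h; rewrite deriv_comp.
apply: (@eqmodX_trans _ _ _ (((c%:P * g ^+ 2) \Po ulog) * wser)).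
  by apply: eqmodXM (eqmodX_comp ulog0 h (eqmodX_refl _ _)) deriv_ulog.
by apply: eqmodX_eq; rewrite comp_polyM comp_polyC rmorphXn /= mulrAC mulrA.
Qed.

Lemma deriv_wser : wser^`() = (- lam)%:P * wser ^+ 2 %[modX K].
Proof. exact: deriv_geom. Qed.

Lemma deriv_Pser : Pser^`() = ((- 2^-1)%:P * wser) * Pser ^+ 2 %[modX K].
Proof. exact/deriv_comp_riccati/deriv_geom. Qed.

Lemma deriv_Qser : Qser^`() = ((-1)%:P * wser) * Qser ^+ 2 %[modX K].
Proof. exact/deriv_comp_riccati/deriv_geom. Qed.

Lemma deriv_Eser : Eser^`() = x%:P * wser * Qser * Eser %[modX K].
Proof.
rewrite deriv_comp.
apply: (@eqmodX_trans _ _ _ (((x%:P * (geom K (-1) * binser)) \Po ulog) * wser)).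
  by apply: eqmodXM (eqmodX_comp ulog0 deriv_binser (eqmodX_refl _ _)) deriv_ulog.
by apply: eqmodX_eq; rewrite !comp_polyM comp_polyC; ring.
Qed.

Lemma deriv_Tser N i j : (Tser N i j)^`() =
  (- (N%:R * lam))%:P * Tser N.+1 i j + (- (i.+1%:R / 2))%:P * Tser N.+1 i.+1 j
  + (x - j%:R)%:P * Tser N.+1 i j.+1 %[modX K].
Proof.
have dG := eqmodX_derivM deriv_Pser deriv_Eser.
have dW := deriv_exp_riccati N deriv_wser.
have dP := deriv_exp_riccati i deriv_Pser.
have dQ := deriv_exp_riccati j deriv_Qser.
apply: eqmodX_trans (eqmodX_derivM (eqmodX_derivM (eqmodX_derivM dW dP) dQ) dG) _.
apply: eqmodX_eq; rewrite /Tser /Gser !exprS expr0 -!mul_polyC.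
rewrite !(rmorphN, rmorphM, rmorphB, rmorph_nat).
ring.
Qed.

End Series.

Section GeneratingFunction.
Context {R : numFieldType}.
Variables (lam x : R).

Lemma chgen_Gser K : chgen lam x K = Gser lam x K.
Proof.
rewrite /chgen /Gser /Pser /Eser /geom /binser !comp_poly_poly.
congr (_ * _); apply: eq_bigr => j _; rewrite /ulog exprZn scalerA.
  by rewrite -exprMn invfM mulNr.
by rewrite exprVn.
Qed.

Lemma Gser_eqmodX {s K} : (s <= K)%N -> Gser lam x s = Gser lam x K %[modX s.+1].
Proof.
move=> hs.
have hu : ulog lam s = ulog lam K %[modX s.+1].
  move=> i hi; rewrite !coefZ !coef_logtr.
  by have -> : (0 < i <= s)%N = (0 < i <= K)%N by apply/idP/idP; lia.
have hpoly (c : nat -> R) : \poly_(j < s.+1) c j = \poly_(j < K.+1) c j %[modX s.+1].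
  by move=> i hi; rewrite !coef_poly hi ifT //; lia.
by apply: eqmodXM; apply: eqmodX_comp (ulog0 _ _) (hpoly _) hu.
Qed.

Lemma Ch_coef {s K} : (s <= K)%N -> Ch s lam x = s`!%:R * (Gser lam x K)`_s.
Proof. by move=> hs; rewrite /Ch chgen_Gser (Gser_eqmodX hs). Qed.

End GeneratingFunction.

Lemma harm_small {R : numFieldType} j N : (N < j)%N -> harm R j N = 0.
Proof. by case: j => [//|j] hj /=; rewrite big_geq. Qed.

Lemma harmS {R : numFieldType} j N :
  harm R j.+1 N.+1 = harm R j.+1 N + harm R j N / N.+1%:R.
Proof.
case: (leqP j N) => hjN; first by rewrite /= big_nat_recr.
by rewrite /= !big_geq ?harm_small ?mul0r ?addr0 //; lia.
Qed.

Lemma chps0n j : chps 0 j = 1%N.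
Proof. by []. Qed.

Lemma chps_n0 i : chps i 0 = 1%N.
Proof. by elim: i => [//|i IH] /=; rewrite big_ord1. Qed.

Lemma chpsSS i j : chps i.+1 j.+1 = (chps i j.+1 + chps i.+1 j)%N.
Proof. by rewrite /= big_ord_recr /= addnC. Qed.

Lemma signr_subn {R : pzRingType} m n : (n <= m)%N -> (-1) ^+ (m - n) = (-1) ^+ (m + n) :> R.
Proof. by move=> h; rewrite -signr_odd oddB // -oddD signr_odd. Qed.

Section Coefficients.
Context {R : numFieldType}.
Variable x : R.

(* [acoef_ext N i j] is [a_{i,j}(N, x)] (so [r = i + j]), extended by
   [a_{0,0}(0, x) = 1] and by [0] outside [1 <= i + j <= N]. *)
Definition acoef_ext (N i j : nat) : R :=
  if i + j == 0 then (N == 0)%:R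
  else if (N < i + j)%N then 0 else acoef i (i + j) N x.

Lemma acoef_ext00 N : acoef_ext N 0 0 = (N == 0)%:R.
Proof. by []. Qed.

Lemma acoef_ext_out N i j : (N < i + j)%N -> (0 < i + j)%N -> acoef_ext N i j = 0.
Proof. by move=> h1 h2; rewrite /acoef_ext ifN ?h1 // -lt0n. Qed.

Lemma acoef_extE M i j : (0 < i + j)%N ->
  acoef_ext M.+1 i j = (-1) ^+ (M.+1 + j) * i`!%:R * (chps i j)%:R * M`!%:R
                       * harm R (i + j).-1 M * ffact x j.
Proof.
move=> hij; rewrite /acoef_ext ifN -?lt0n //.
case: ltnP => hM; first by rewrite harm_small ?mulr0 ?mul0r //; lia.
by rewrite /acoef /H addKn [(M.+1 + i)%N]addnC subnDl signr_subn //; lia.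
Qed.

Lemma acoef_ext1 i j : acoef_ext 1 i j =
  (if i is i'.+1 then - i%:R * acoef_ext 0 i' j else 0)
  + (if j is j'.+1 then (x - j'%:R) * acoef_ext 0 i j' else 0).
Proof.
case: (posnP (i + j)) => hij.
  have [-> ->] : (i = 0 /\ j = 0)%N by lia.
  by rewrite addr0.
rewrite acoef_extE //; case: (ltnP 1 (i + j)) => h.
  rewrite harm_small; last by lia.
  by case: i hij h => [|[|i]] hij h; case: j hij h => [|[|j]] hij h //=;
    rewrite ?acoef_ext_out ?mulr0 ?mul0r ?addr0 //; lia.
have [[-> ->]|[-> ->]] : ((i = 1 /\ j = 0) \/ (i = 0 /\ j = 1))%N by lia.
  by rewrite addn0 expr1 chps_n0 acoef_ext00 factS fact0 /ffact big_ord0 /=; ring.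
by rewrite acoef_ext00 fact0 /ffact big_ord1 /=; ring.
Qed.

Lemma acoef_extS_r1 M i j : (i + j = 1)%N -> acoef_ext M.+2 i j =
  - M.+1%:R * acoef_ext M.+1 i j
  + (if i is i'.+1 then - i%:R * acoef_ext M.+1 i' j else 0)
  + (if j is j'.+1 then (x - j'%:R) * acoef_ext M.+1 i j' else 0).
Proof.
move=> hij; have [[-> ->]|[-> ->]] : ((i = 1 /\ j = 0) \/ (i = 0 /\ j = 1))%N by lia.
  rewrite acoef_ext00 !acoef_extE // !addn0 !chps_n0 !factS !exprS /ffact big_ord0 /=.
  by rewrite !natrM; ring.
rewrite acoef_ext00 !acoef_extE // !addn1 !factS !exprS /ffact !big_ord1 /=.
by rewrite !natrM; ring.
Qed.

Lemma acoef_extS_ge2 M i j : (1 < i + j)%N -> acoef_ext M.+2 i j =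
  - M.+1%:R * acoef_ext M.+1 i j
  + (if i is i'.+1 then - i%:R * acoef_ext M.+1 i' j else 0)
  + (if j is j'.+1 then (x - j'%:R) * acoef_ext M.+1 i j' else 0).
Proof.
have := natr_succ_neq0 (R := R) M.
case: i => [|i]; case: j => [|j] hM hij //.
- case: j hij => [//|j] hij.
  rewrite !acoef_extE ?add0n // !succnK harmS !chps0n ffactS fact0 !addnS !addSn !exprS.
  by rewrite (factS M) natrM; field.
- case: i hij => [//|i] hij.
  rewrite !acoef_extE ?addn0 // !succnK harmS !chps_n0 (factS i.+1) !exprS (factS M) !natrM.
  by field.
rewrite !acoef_extE; try lia.
rewrite !addSn !addnS !succnK harmS chpsSS natrD ffactS (factS i) (factS M) !natrM !exprS.
by field.
Qed.

Lemma acoef_extS N i j : acoef_ext N.+1 i j =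
  - N%:R * acoef_ext N i j
  + (if i is i'.+1 then - i%:R * acoef_ext N i' j else 0)
  + (if j is j'.+1 then (x - j'%:R) * acoef_ext N i j' else 0).
Proof.
case: N => [|M]; first by rewrite acoef_ext1 mulr0n oppr0 mul0r add0r.
have [hij|[hij|hij]] : (i + j = 0 \/ i + j = 1 \/ 1 < i + j)%N by lia.
- have [-> ->] : (i = 0 /\ j = 0)%N by lia.
  by rewrite !acoef_ext00 /= mulr0 !addr0.
- exact: acoef_extS_r1.
- exact: acoef_extS_ge2.
Qed.

End Coefficients.

Lemma big_nat_droplast (V : nmodType) n (F : nat -> V) : F n = 0 ->
  \sum_(0 <= j < n.+1) F j = \sum_(0 <= j < n) F j.
Proof. by move=> h; rewrite big_nat_recr //= h addr0. Qed.

Section Derivatives.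
Context {R : numFieldType}.
Variables (lam x : R) (K : nat).
Hypothesis lam_neq0 : lam != 0.

Definition dcoef (N i j : nat) : R :=
  lam ^+ N * (acoef_ext x N i j * lam ^- (i + j) * 2 ^- i).

Lemma dcoef00 N : dcoef N 0 0 = (N == 0)%:R.
Proof.
rewrite /dcoef acoef_ext00 addn0 !expr0 !invr1 !mulr1.
by case: N => [|N] /=; rewrite ?expr0 ?mul1r ?mulr0n ?mulr0.
Qed.

Lemma dcoef_out N i j : (N < i + j)%N -> dcoef N i j = 0.
Proof. by move=> h; rewrite /dcoef acoef_ext_out ?mul0r ?mulr0 //; lia. Qed.

Lemma dcoefS N i j : dcoef N.+1 i j = dcoef N i j * (- (N%:R * lam))
  + (if i is i'.+1 then dcoef N i' j * (- (i'.+1%:R / 2)) else 0)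
  + (if j is j'.+1 then dcoef N i j' * (x - j'%:R) else 0).
Proof.
have h2 : (2 : R) != 0 by rewrite pnatr_eq0.
rewrite /dcoef acoef_extS.
by case: i => [|i]; case: j => [|j];
  rewrite ?addSn ?addnS ?add0n ?addn0 !exprS; field; rewrite ?lam_neq0 ?h2 ?expf_neq0.
Qed.

(* The closed form of the N-th derivative of [Gser], proved in [derivn_Gser]. *)
Definition Dser (N : nat) : {poly R} :=
  \sum_(0 <= i < N.+2) \sum_(0 <= j < N.+2) dcoef N i j *: Tser lam x K N i j.

Lemma deriv_Dser N : (Dser N)^`() = Dser N.+1 %[modX K].
Proof.
pose T := Tser lam x K N.+1.
pose sum2 (F : nat -> nat -> {poly R}) n := \sum_(0 <= i < n) \sum_(0 <= j < n) F i j.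
apply: (@eqmodX_trans _ _ _ (sum2 (fun i j => dcoef N i j *:
   ((- (N%:R * lam))%:P * T i j + (- (i.+1%:R / 2))%:P * T i.+1 j
   + (x - j%:R)%:P * T i j.+1)) N.+2)).
  rewrite /Dser /sum2 linear_sum; apply: eqmodX_sum => i _.
  rewrite linear_sum; apply: eqmodX_sum => j _.
  by rewrite linearZ /=; apply/eqmodXZ/deriv_Tser.
apply: eqmodX_eq.
transitivity (sum2 (fun i j => (dcoef N i j * (- (N%:R * lam))) *: T i j) N.+2
  + sum2 (fun i j => (dcoef N i j * (- (i.+1%:R / 2))) *: T i.+1 j) N.+2
  + sum2 (fun i j => (dcoef N i j * (x - j%:R)) *: T i j.+1) N.+2).
  rewrite /sum2 -!big_split; apply: eq_bigr => i _; rewrite -!big_split.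
  by apply: eq_bigr => j _; rewrite !scalerDr !mul_polyC !scalerA.
transitivity (sum2 (fun i j => (dcoef N i j * (- (N%:R * lam))) *: T i j
   + (if i is i'.+1 then dcoef N i' j * (- (i'.+1%:R / 2)) else 0) *: T i j
   + (if j is j'.+1 then dcoef N i j' * (x - j'%:R) else 0) *: T i j) N.+3); last first.
  by apply: eq_bigr => i _; apply: eq_bigr => j _; rewrite dcoefS !scalerDl.
rewrite /sum2; under [RHS]eq_bigr => i _ do rewrite !big_split; rewrite !big_split /=.
congr (_ + _ + _).
- rewrite [RHS]big_nat_droplast; last first.
    by apply: big1 => j _; rewrite dcoef_out ?mul0r ?scale0r //; lia.
  apply: eq_bigr => i _; rewrite [RHS]big_nat_droplast // dcoef_out ?mul0r ?scale0r //; lia.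
- rewrite [RHS]big_nat_recl //= [in RHS]big1 ?add0r; last by move=> j _; rewrite scale0r.
  apply: eq_bigr => i _; rewrite [RHS]big_nat_droplast //.
  by rewrite dcoef_out ?mul0r ?scale0r //; lia.
- rewrite [RHS]big_nat_droplast; last first.
    by apply: big1 => -[|j] _; rewrite ?scale0r // dcoef_out ?mul0r ?scale0r //; lia.
  by apply: eq_bigr => i _; rewrite [RHS]big_nat_recl //= scale0r add0r.
Qed.

Lemma Dser0 : Dser 0 = Gser lam x K.
Proof.
rewrite /Dser !big_nat_recl //= !big_geq // !addr0.
rewrite (dcoef_out 0 0 1) ?(dcoef_out 0 1 0) ?(dcoef_out 0 1 1) // !scale0r !addr0.
by rewrite dcoef00 scale1r /Tser !expr0 !mul1r.
Qed.

Lemma derivn_Gser N : (Gser lam x K)^`(N) = Dser N %[modX K.+1 - N].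
Proof.
elim: N => [|N IH]; first by rewrite subn0 Dser0 derivn0; apply: eqmodX_refl.
rewrite derivnS subnS.
apply: eqmodX_trans (eqmodX_deriv IH) _.
by apply: eqmodXW (deriv_Dser N); lia.
Qed.

End Derivatives.

Section Coef4.
Context {R : comNzRingType}.
Implicit Types A B C D : {poly R}.

Lemma coefM_widen A B {a b} : (a < b)%N ->
  (A * B)`_a = \sum_(l < b) (if (l <= a)%N then A`_l * B`_(a - l) else 0).
Proof.
move=> hab; rewrite coefM (big_ord_widen _ (fun l => A`_l * B`_(a - l)) hab) big_mkcond.
by apply: eq_bigr => l _; rewrite ltnS.
Qed.

Lemma big_ord_addn_eq (G : nat -> R) b l a : (a < b)%N ->
  \sum_(t < b | (l + t == a)%N) G t = if (l <= a)%N then G (a - l)%N else 0.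
Proof.
move=> hab; case: (leqP l a) => hla; last first.
  by rewrite big_pred0 // => t; apply/negbTE; lia.
rewrite (eq_bigl (fun t : 'I_b => t == (a - l)%N :> nat)) ?big_ord1_eq ?ifT //; first lia.
by move=> t /=; apply/eqP/eqP; lia.
Qed.

Lemma coefM4 A B C D a : (A * B * C * D)`_a =
  \sum_(l < a.+1) \sum_(e < a.+1) \sum_(f < a.+1) \sum_(s < a.+1 | (l + e + f + s == a)%N)
    A`_l * B`_e * C`_f * D`_s.
Proof.
rewrite -!mulrA (coefM_widen _ _ (ltnSn a)); apply: eq_bigr => l _.
under eq_bigr => e _ do under eq_bigr => f _ do
  rewrite (big_ord_addn_eq (fun s => A`_l * B`_e * C`_f * D`_s)) //.
case: (leqP l a) => hla; last first.
  by rewrite big1 // => e _; rewrite big1 // => f _; rewrite ifN //; lia.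
rewrite (coefM_widen _ _ (_ : (a - l < a.+1)%N)); last by lia.
rewrite mulr_sumr; apply: eq_bigr => e _.
case: (leqP e (a - l)) => hel; last first.
  by rewrite mulr0 big1 // => f _; rewrite ifN //; lia.
rewrite (coefM_widen _ _ (_ : (a - l - e < a.+1)%N)); last by lia.
rewrite !mulr_sumr; apply: eq_bigr => f _.
case: (leqP f (a - l - e)) => hf; last by rewrite !mulr0 ifN //; lia.
by rewrite ifT ?mulrA ?subnDA //; lia.
Qed.

End Coef4.

Lemma stirling1S n l : stirling1 n.+1 l =
  (if l is l'.+1 then stirling1 n l' else 0) - n%:Z * stirling1 n l.
Proof.
rewrite /stirling1 big_ord_recr /= mulrBr coefB coefMX coefMC.
by case: l => [|l] //=; rewrite mulrC.
Qed.

Lemma stirling1_0n l : stirling1 0 l = (l == 0)%:R.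
Proof. by rewrite /stirling1 big_ord0 coef1. Qed.

Lemma stirling1_n0 n : stirling1 n.+1 0 = 0.
Proof.
elim: n => [|n IH]; first by rewrite stirling1S stirling1_0n /= mul0r subr0.
by rewrite stirling1S IH mulr0 subr0.
Qed.

Section StirlingCoefficients.
Context {R : numFieldType}.
Variables (lam : R) (K : nat).
Hypothesis lam_neq0 : lam != 0.

Lemma wser_inv : (1 + lam *: 'X) * wser lam K = 1 %[modX K.+1].
Proof.
move=> i hi; rewrite mulrDl mul1r -scalerAl coefD coefZ coefXM coef1 coef_poly hi.
case: i hi => [|i] hi /=; first by rewrite mulr0 addr0.
by rewrite coef_poly ifT ?exprS; [ring | lia].
Qed.

(* From [(1 + lam t) (u^(m+1))' = (m+1) u^m]. *)
Lemma coef_ulog_expS m {d} : (d < K)%N ->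
  (ulog lam K ^+ m.+1)`_d.+1 *+ d.+1 + lam * ((ulog lam K ^+ m.+1)`_d *+ d)
  = (ulog lam K ^+ m)`_d *+ m.+1.
Proof.
move=> hd; set u := ulog lam K.
have hu : (1 + lam *: 'X) * (u ^+ m.+1)^`() = u ^+ m *+ m.+1 %[modX K].
  have hw : (1 + lam *: 'X) * wser lam K * u ^+ m = u ^+ m %[modX K].
    by rewrite -[X in _ = X %[modX _]]mul1r; apply/eqmodXMr/(eqmodXW _ (leqnSn K) (wser_inv)).
  rewrite deriv_exp /= mulrnAr mulrA; apply: eqmodXMn; apply: (eqmodX_trans _ hw).
  by apply/eqmodXMr/eqmodXMl/deriv_ulog.
rewrite -[RHS]coefMn -(hu d hd) mulrDl mul1r -scalerAl coefD coefZ coefXM !coef_deriv.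
by case: d hd {hu} => [|d] hd //=; rewrite mulr0n mulr0.
Qed.

Lemma coef_ulog_exp d m : (d <= K)%N ->
  d`!%:R * (ulog lam K ^+ m)`_d = m`!%:R * lam ^+ d * lam ^- m * (stirling1 d m)%:~R.
Proof.
elim: d m => [|d IH] [|m] hd.
- by rewrite !expr0 coef1 stirling1_0n /= divr1 !mulr1.
- by rewrite coef_exp_lt ?ulog0 // stirling1_0n /= !mulr0.
- by rewrite expr0 coef1 stirling1_n0 /= !mulr0.
have := coef_ulog_expS m hd; have := IH m (ltnW hd); have := IH m.+1 (ltnW hd).
set A := (ulog lam K ^+ m)`_d; set B := (ulog lam K ^+ m.+1)`_d.
set C := (ulog lam K ^+ m.+1)`_d.+1 => hB hA hrec.
have -> : C = (A *+ m.+1 - lam * (B *+ d)) / d.+1%:R.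
  by rewrite -hrec; field; rewrite natr_succ_neq0.
rewrite stirling1S intrB intrM /= factS natrM.
have := natr_fact_neq0 (R := R) d; have := natr_fact_neq0 (R := R) m => hm hdf.
transitivity ((d`!%:R * A) *+ m.+1 - lam * ((d`!%:R * B) *+ d)).
  by field; rewrite natr_succ_neq0.
rewrite hA hB factS natrM !exprS (_ : (d%:~R : R) = d%:R) //.
by field; rewrite lam_neq0 expf_neq0.
Qed.

End StirlingCoefficients.

Lemma ffact_natr {R : numFieldType} (q m : nat) : ffact (q%:R : R) m = (q ^_ m)%:R.
Proof.
elim: m => [|m IH]; first by rewrite /ffact big_ord0 ffactn0.
rewrite ffactS IH ffactnSr natrM.
by case: (leqP m q) => h; [rewrite natrB | rewrite ffact_small ?mul0r].
Qed.

Lemma ffact_natr_pred {R : numFieldType} (p m : nat) :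
  ffact ((p + m)%:R - 1 : R) m = ('C((p + m).-1, m) * m`!)%:R.
Proof.
rewrite bin_ffact; case: (posnP (p + m)) => h.
  have -> : m = 0%N by lia.
  by rewrite /ffact big_ord0 ffactn0.
by rewrite -{1}(prednK h) -natr1 addrK ffact_natr.
Qed.

Section CoefficientExtraction.
Context {R : numFieldType}.
Variables (lam x : R) (K : nat).
Hypothesis lam_neq0 : lam != 0.

Definition Vser (m : nat) : {poly R} := \poly_(e < K.+1) (ulog lam K ^+ m)`_(e + m).

Lemma ulog_exp_split m : ulog lam K ^+ m = 'X^m * Vser m %[modX K.+1].
Proof.
move=> d hd; rewrite coefXnM; case: ltnP => h; first by rewrite coef_exp_lt ?ulog0.
by rewrite coef_poly ifT ?subnK //; lia.
Qed.

Lemma exp_comp_ulog_split g i {k} : (k <= K)%N ->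
  (g \Po ulog lam K) ^+ i = \sum_(m < k.+1) (g ^+ i)`_m *: ('X^m * Vser m) %[modX k.+1].
Proof.
move=> hk; rewrite -rmorphXn /=.
apply: eqmodX_trans (comp_poly_eqmodX k.+1 _ _ (ulog0 _ _)) _.
by apply: eqmodX_sum => m _; apply/eqmodXZ/(eqmodXW _ _ (ulog_exp_split m)).
Qed.

Lemma Tser_split N i j {k} : (k <= K)%N ->
  Tser lam x K N i j = \sum_(m < k.+1) \sum_(n < k.+1)
      ((geom K (- 2^-1) ^+ i)`_m * (geom K (-1) ^+ j)`_n) *:
        ('X^(m + n) * (wser lam K ^+ N * Vser m * Vser n * Gser lam x K)) %[modX k.+1].
Proof.
move=> hk; rewrite /Tser.
have hP := exp_comp_ulog_split (geom K (- 2^-1)) i hk.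
have hQ := exp_comp_ulog_split (geom K (-1)) j hk.
apply: eqmodX_trans (eqmodXMr _ (eqmodXM (eqmodXMl _ hP) hQ)) _.
apply: eqmodX_eq; rewrite [wser _ _ ^+ N * _]big_distrr !big_distrl /=.
apply: eq_bigr => m _.
rewrite big_distrr big_distrl /=; apply: eq_bigr => n _.
by rewrite -!mul_polyC exprD polyCM; ring.
Qed.

Definition inner_sum (N m n a : nat) : R :=
  \sum_(l < a.+1) \sum_(e < a.+1) \sum_(f < a.+1) \sum_(s < a.+1 | (l + e + f + s == a)%N)
        (-1) ^+ l * lam ^+ (a - s)
        * (multi4 R a l e f s / ('C(e + m, m)%:R * 'C(f + n, n)%:R))
        * ffact (N%:R + l%:R - 1) l
        * (stirling1 (e + m) m)%:~R * (stirling1 (f + n) n)%:~R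
        * Ch s lam x.

Definition middle_term (N k i r m n a : nat) : R :=
  multi3 R k m n a * (- 2^-1) ^+ m * (-1) ^+ n
  * ffact ((i + m)%:R - 1) m * ffact ((r - i + n)%:R - 1) n * inner_sum N m n a.

Lemma coef_ulog_exp_shift d m : (d + m <= K)%N ->
  (ulog lam K ^+ m)`_(d + m) =
  m`!%:R * lam ^+ d * (stirling1 (d + m) m)%:~R / (d + m)`!%:R.
Proof.
move=> h; have := coef_ulog_exp lam K lam_neq0 (d + m) m h.
have hf := natr_fact_neq0 (R := R) (d + m) => e.
apply: (mulfI hf); rewrite e exprD.
by field; rewrite ?hf ?lam_neq0 ?expf_neq0.
Qed.

Lemma inner_sumE N m n a : (m + n + a <= K)%N ->
  inner_sum N m n a = a`!%:R * (wser lam K ^+ N * Vser m * Vser n * Gser lam x K)`_a.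
Proof.
move=> hK; symmetry; rewrite coefM4 mulr_sumr; apply: eq_bigr => l _.
rewrite mulr_sumr; apply: eq_bigr => e _; rewrite mulr_sumr; apply: eq_bigr => f _.
rewrite mulr_sumr; apply: eq_bigr => s /eqP hs.
rewrite /wser coef_geom_exp; last by lia.
rewrite !coef_poly !ifT; try lia.
rewrite !coef_ulog_exp_shift; try lia.
rewrite (Ch_coef lam x (_ : s <= K)%N); last by lia.
have -> : (a - s = l + e + f)%N by lia.
rewrite -(bin_fact (leq_addl e m)) -(bin_fact (leq_addl f n)) !addnK.
rewrite -natrD ffact_natr_pred /multi4 !natrM !exprD [(- lam) ^+ _]exprNn.
have hC p q : ('C(p + q, q)%:R : R) != 0 by rewrite pnatr_eq0 -lt0n bin_gt0 leq_addl.
have := natr_fact_neq0 (R := R).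
move: (stirling1 (e + m) m)%:~R (stirling1 (f + n) n)%:~R (Gser lam x K)`_s => S1 S2 G hf.
by field; rewrite !hf !hC.
Qed.

Lemma coef_Tser N i j k : (k <= K)%N ->
  k`!%:R * (Tser lam x K N i j)`_k =
  \sum_(m < k.+1) \sum_(n < k.+1) \sum_(a < k.+1 | (m + n + a == k)%N)
    middle_term N k i (i + j) m n a.
Proof.
move=> hk; rewrite (Tser_split N i j hk k (ltnSn k)) !coef_sum mulr_sumr.
apply: eq_bigr => m _; rewrite coef_sum mulr_sumr; apply: eq_bigr => n _.
rewrite (big_ord_addn_eq (fun a => middle_term N k i (i + j) m n a)) //.
rewrite coefZ coefXnM; case: ltnP => hmn /=; first by rewrite !mulr0.
have hm : (m <= K)%N by have := ltn_ord m; lia.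
have hn : (n <= K)%N by have := ltn_ord n; lia.
rewrite !coef_geom_exp // /middle_term inner_sumE; last by lia.
rewrite addKn !ffact_natr_pred /multi3 !natrM.
have := natr_fact_neq0 (R := R); set a := (k - (m + n))%N => hf.
by field; rewrite !hf.
Qed.

End CoefficientExtraction.

Section Triangle.
Variables (V : nmodType) (F : nat -> nat -> V).

Lemma sum_square_diag {B n} : (n < B)%N ->
  \sum_(i < B) \sum_(j < B | (i + j == n)%N) F i j = \sum_(i < n.+1) F i (n - i).
Proof.
move=> hn; rewrite (big_ord_widen _ (fun i => F i (n - i)) hn) [RHS]big_mkcond /=.
apply: eq_bigr => i _; case: (leqP i n) => hi; last first.
  by rewrite ifN; [apply: big1 => j /eqP hj; exfalso | ]; lia.
have -> : \sum_(j < B | (i + j == n)%N) F i j = \sum_(j < B | j == (n - i)%N :> nat) F i j.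
  by apply: eq_bigl => j; apply/eqP/eqP; lia.
by rewrite big_ord1_eq !ifT //; lia.
Qed.

Lemma sum_square_triangle B n : (n <= B)%N ->
  \sum_(i < B) \sum_(j < B | (i + j < n)%N) F i j = \sum_(r < n) \sum_(i < r.+1) F i (r - i).
Proof.
elim: n => [|n IH] hn.
  by rewrite big_ord0 big1 // => i _; rewrite big_pred0.
rewrite big_ord_recr /= -IH ?(ltnW hn) // -(sum_square_diag hn) -big_split /=.
apply: eq_bigr => i _; rewrite big_mkcond [X in _ = X + _]big_mkcond.
rewrite [X in _ = _ + X]big_mkcond -big_split /=; apply: eq_bigr => j _.
by rewrite ltnS; case: ltngtP; rewrite ?addr0 ?add0r.
Qed.

End Triangle.

Lemma Ch_coef_Dser {R : numFieldType} (lam x : R) N k : lam != 0 ->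
  Ch (k + N) lam x = k`!%:R * (Dser lam x (k + N) N)`_k.
Proof.
move=> lam_neq0; rewrite (Ch_coef lam x (leqnn (k + N))).
have hk : (k < (k + N).+1 - N)%N by lia.
rewrite -(derivn_Gser _ _ _ lam_neq0 N k hk) coef_derivn (addnC N k).
by rewrite -(ffact_fact (leq_addl k N)) addnK natrM -[_ *+ (_ ^_ _)]mulr_natr; ring.
Qed.

Lemma dcoef_acoef {R : numFieldType} (lam x : R) N i r : (0 < r <= N)%N -> (i <= r)%N ->
  dcoef lam x N i (r - i) = lam ^+ N * (acoef i r N x * lam ^- r * 2 ^- i).
Proof.
by move=> hr hi; rewrite /dcoef /acoef_ext subnKC // ifN ?ifN; try lia.
Qed.

Theorem theorem4 (R : numFieldType) (lam x : R) (N k : nat) :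
  lam != 0 -> (1 <= N)%N ->
  Ch (k + N) lam x =
  lam ^+ N *
  \sum_(1 <= r < N.+1) \sum_(i < r.+1)
    acoef i r N x * lam ^- r * (2%:R : R) ^- i *
    \sum_(m < k.+1) \sum_(n < k.+1) \sum_(a < k.+1 | (m + n + a == k)%N)
      multi3 R k m n a * (- 2%:R^-1) ^+ m * (-1) ^+ n
      * ffact ((i + m)%:R - 1) m * ffact ((r - i + n)%:R - 1) n *
      \sum_(l < a.+1) \sum_(e < a.+1) \sum_(f < a.+1) \sum_(s < a.+1
             | (l + e + f + s == a)%N)
        (-1) ^+ l * lam ^+ (a - s)
        * (multi4 R a l e f s / ('C(e + m, m)%:R * 'C(f + n, n)%:R))
        * ffact (N%:R + l%:R - 1) l
        * (stirling1 (e + m) m)%:~R * (stirling1 (f + n) n)%:~R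
        * Ch s lam x.
Proof.
move=> lam_neq0 hN.
pose M i r := \sum_(m < k.+1) \sum_(n < k.+1) \sum_(a < k.+1 | (m + n + a == k)%N)
  middle_term lam x N k i r m n a.
pose T i j := dcoef lam x N i j * M i (i + j)%N.
transitivity (\sum_(i < N.+2) \sum_(j < N.+2 | (i + j < N.+1)%N) T i j).
  rewrite Ch_coef_Dser // /Dser !big_mkord coef_sum mulr_sumr; apply: eq_bigr => i _.
  rewrite coef_sum big_mkord mulr_sumr [RHS]big_mkcond; apply: eq_bigr => j _.
  rewrite coefZ mulrCA coef_Tser //; last by lia.
  by case: ifP => // /negbT; rewrite -leqNgt => hij; rewrite dcoef_out ?mul0r.
rewrite sum_square_triangle // big_ord_recl big1 ?add0r; last first.
  by move=> i _; rewrite ord1 subnn /T dcoef00 (negbTE (lt0n_neq0 hN)) mul0r.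
rewrite big_add1 big_mkord /= mulr_sumr; apply: eq_bigr => r _.
rewrite mulr_sumr; apply: eq_bigr => i _; change (bump 0 r) with r.+1.
have hi : (i <= r.+1)%N by rewrite -ltnS.
have hr : (0 < r.+1 <= N)%N by have := ltn_ord r; lia.
by rewrite /T subnKC // dcoef_acoef // -mulrA.
Qed.
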